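(* Let $R$ be an associative ring with identity and involution $*$, and let $a\in R^{\#}\cap R^{\dagger}$. Then $a\in R^{SEP}$ if and only if $(aa^*a^{\dagger}a^{\dagger}a^2)^k\in PE(R)$ for both $k=2$ and $k=3$.
   Context: An involution on $R$ is a map $x\mapsto x^*$ with $(x^* )^*=x$, $(x+y)^*=x^*+y^*$, $(xy)^*=y^*x^*$. An element $a$ is Moore–Penrose invertible if there is $b$ with $aba=a$, $bab=b$, $(ab)^*=ab$, $(ba)^*=ba$; such $b$ is unique, denoted $a^{\dagger}$, and $R^{\dagger}$ is the set of such $a$. An element $a$ is group invertible if there is $b$ with $aba=a$, $bab=b$, $ab=ba$; such $b$ is unique, denoted $a^{\#}$, and $R^{\#}$ is the set of such $a$. $PE(R)=\{e\in R: e^2=e=e^*\}$ is the set of projections. For $a\in R^{\#}\cap R^{\dagger}$, $a$ is SEP if $a^*=a^{\dagger}=a^{\#}$; $R^{SEP}$ denotes the set of SEP elements. *)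

From HB Require Import structures.
From mathcomp Require Import all_boot all_algebra.
Set Implicit Arguments. Unset Strict Implicit. Unset Printing Implicit Defensive.
Import GRing.Theory.
Local Open Scope ring_scope.

Definition is_involution (R : pzRingType) (s : R -> R) : Prop :=
  [/\ forall x, s (s x) = x,
      forall x y, s (x + y) = s x + s y
    & forall x y, s (x * y) = s y * s x].

Definition is_MP_inverse (R : pzRingType) (s : R -> R) (a b : R) : Prop :=
  [/\ a * b * a = a, b * a * b = b, s (a * b) = a * b & s (b * a) = b * a].

Definition is_group_inverse (R : pzRingType) (a b : R) : Prop :=
  [/\ a * b * a = a, b * a * b = b & a * b = b * a].

Definition is_projection (R : pzRingType) (s : R -> R) (e : R) : Prop :=
  e * e = e /\ s e = e.

(* a is SEP: a is group and MP invertible and a^* = a^dagger = a^#.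
   (Both inverses are unique, so "exists" is equivalent to "for all".) *)
Definition is_SEP (R : pzRingType) (s : R -> R) (a : R) : Prop :=
  exists b c, [/\ is_MP_inverse s a b, is_group_inverse a c, s a = b & b = c].

(* Put x := a a^* a^+ a^+ a^2, where a^+ is the Moore-Penrose and a^# the group
   inverse.  If x^2 and x^3 are projections, then x^2 = x^6 = x^3.  The element
   r := a (a a^#)^* satisfies r a^+ = a a^+ and r a a^+ = r, hence r r a^+ a^+ = a a^+,
   and this gives z x^2 = x for z := a^# a^# r r (a^+)^* a^+; so x^2 = x^3 forces
   x^2 = x and x is a projection.  From x = a a^+ x we get x = x a a^+, which yields
   a a^# = a a^+, i.e. a^# = a^+.  Then x = a a^* is idempotent, which makes a^* a
   Moore-Penrose inverse of a.  Conversely, if a^* = a^+ = a^# then x = a a^+. *)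
From mathcomp Require Import all_boot all_algebra.
Local Open Scope ring_scope.
Import GRing.Theory.
Set Implicit Arguments.
Unset Strict Implicit.

Lemma expr_idem (R : pzRingType) (e : R) (n : nat) : e * e = e -> e ^+ n.+1 = e.
Proof. by move=> ee; elim: n => [|n IHn]; rewrite ?expr1 // exprS IHn. Qed.

Lemma expr2_eq_expr3_of_idem (R : pzRingType) (x : R) :
  x ^+ 2 * x ^+ 2 = x ^+ 2 -> x ^+ 3 * x ^+ 3 = x ^+ 3 -> x ^+ 2 = x ^+ 3.
Proof.
move=> idem2 idem3; transitivity (x ^+ 2 * x ^+ 2 * x ^+ 2); first by rewrite !idem2.
by rewrite -!exprD -idem3 -exprD.
Qed.

Lemma expr2_idem_of_expr3 (R : pzRingType) (x z : R) :
  z * x ^+ 2 = x -> x ^+ 2 = x ^+ 3 -> x ^+ 2 = x.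
Proof.
move=> zx x23; transitivity (z * x ^+ 2 * x); first by rewrite zx expr2.
by rewrite -mulrA -exprSr -x23 zx.
Qed.

Section Involution.

Variables (R : pzRingType) (s : R -> R).
Hypothesis inv : is_involution s.

Lemma MP_inverse_unique (a b c : R) :
  is_MP_inverse s a b -> is_MP_inverse s a c -> b = c.
Proof.
have [_ _ sM] := inv; move=> [b1 b2 b3 b4] [c1 c2 c3 c4].
have sa1 : s a = s a * s (a * c) by rewrite -sM c1.
have sa2 : s a = s (b * a) * s a by rewrite -sM mulrA b1.
have Eb : b = b * a * c.
  transitivity (b * (s b * (s a * s (a * c)))); first by rewrite -sa1 -sM b3 mulrA b2.
  by rewrite (mulrA (s b)) -sM b3 c3 !mulrA b2.
have Ec : c = b * a * c.
  transitivity ((s (b * a) * s a) * s c * c); first by rewrite -sa2 -sM c4 c2.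
  by rewrite -(mulrA _ (s a)) -sM b4 c4 -[in RHS]c2 !mulrA.
by rewrite Eb -Ec.
Qed.

Lemma MP_mul_projection (a b : R) : is_MP_inverse s a b -> is_projection s (a * b).
Proof. by case=> b1 _ b3 _; split; rewrite // mulrA b1. Qed.

Lemma group_inverse_eq_MP (a b c : R) :
  is_MP_inverse s a b -> is_group_inverse a c -> a * c = a * b -> c = b.
Proof.
move=> mpb [c1 c2 c3] acb; have [_ _ b3 _] := mpb.
by apply: MP_inverse_unique mpb; split; rewrite // -?c3 acb.
Qed.

Lemma MP_inverse_eq_star (a b : R) :
  is_MP_inverse s a b -> a * s a * (a * s a) = a * s a -> s a = b.
Proof.
have [ss _ sM] := inv; move=> mpb idem; have [b1 _ _ b4] := mpb.
have a_eq : a = a * s a * s b by rewrite -mulrA -sM b4 mulrA b1.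
have aaa : a * s a * a = a by rewrite {3}a_eq mulrA idem -a_eq.
apply: MP_inverse_unique mpb; split => //.
- by rewrite -[in RHS]aaa !sM ss mulrA.
- by rewrite sM ss.
- by rewrite sM ss.
Qed.

Section MPInverse.

Variables (a ad : R).
Hypothesis mp : is_MP_inverse s a ad.

Lemma MP_star_mulr : s a * a * ad = s a.
Proof. by have [_ _ sM] := inv; case: mp => H1 _ H3 _; rewrite -mulrA -H3 -sM H1. Qed.

Lemma MP_star_mull : ad * a * s a = s a.
Proof. by have [_ _ sM] := inv; case: mp => H1 _ _ H4; rewrite -H4 -sM mulrA H1. Qed.

Lemma MP_adj_mul_star : s ad * ad * (a * s a) = a * ad.
Proof.
have [_ _ sM] := inv; case: mp => _ _ H3 _.
by rewrite -mulrA (mulrA ad) MP_star_mull -sM H3.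
Qed.

Lemma group_MP_mul_star_eq : is_group_inverse a ad ->
  a * s a * ad * ad * a ^+ 2 = a * s a.
Proof.
case=> g1 _ g3.
have ad_sq : ad * ad * a ^+ 2 = ad * a.
  by rewrite expr2 -(mulrA ad) (mulrA ad a) -[in LHS]g3 g1.
transitivity (a * s a * (ad * ad * a ^+ 2)); first by rewrite !mulrA.
by rewrite ad_sq -g3 -(mulrA a) (mulrA (s a)) MP_star_mulr.
Qed.

Variable ag : R.
Hypothesis gp : is_group_inverse a ag.

Let r := a * s (a * ag).

Lemma adj_group_idem_mulMP : s (a * ag) * ad = ad.
Proof.
have [_ _ sM] := inv; have [_ H2 _ H4] := mp; have [G1 _ G3] := gp.
have ad_eq : ad = s a * s ad * ad by rewrite -sM H4 H2.
have aag : a * (a * ag) = a by rewrite G3 mulrA G1.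
by rewrite {1}ad_eq !mulrA -sM aag -ad_eq.
Qed.

Lemma adj_group_idem_mul_proj : s (a * ag) * (a * ad) = s (a * ag).
Proof. by have [_ _ sM] := inv; case: mp => H1 _ H3 _; rewrite -H3 -sM mulrA H1. Qed.

Lemma group_MP_lcancel :
  ag * r * r * (s ad * ad) * (a * s a * ad * ad * a ^+ 2) = a.
Proof.
have [H1 _ _ _] := mp; have [G1 _ G3] := gp.
have rp : r * (a * ad) = r by rewrite /r -mulrA adj_group_idem_mul_proj.
have rad : r * ad = a * ad by rewrite /r -mulrA adj_group_idem_mulMP.
transitivity (ag * (r * r * (s ad * ad * (a * s a)) * ad * ad * a * a)).
  by rewrite expr2 !mulrA.
rewrite MP_adj_mul_star -(mulrA r) rp -(mulrA r) rad rp.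
by rewrite rad H1 mulrA -G3 G1.
Qed.

Let x := a * s a * ad * ad * a ^+ 2.

Lemma group_MP_expr2_idem : x ^+ 2 = x ^+ 3 -> x ^+ 2 = x.
Proof.
have [G1 _ G3] := gp.
apply: (@expr2_idem_of_expr3 _ _ (ag * (ag * r * r * (s ad * ad)))).
rewrite expr2 mulrA -(mulrA ag) group_MP_lcancel.
by rewrite /x !mulrA -G3 G1.
Qed.

Lemma group_eq_MP_of_herm : s x = x -> ag = ad.
Proof.
have [_ _ sM] := inv; have [H1 _ H3 _] := mp; have [G1 _ G3] := gp.
move=> sx; have px : a * ad * x = x by rewrite /x !mulrA H1.
have xp : x * (a * ad) = x by rewrite -{1}sx -H3 -sM px sx.
apply: (group_inverse_eq_MP mp gp).
transitivity (ag * (ag * r * r * (s ad * ad) * (x * (a * ad)))).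
  by rewrite xp /x group_MP_lcancel G3.
by rewrite (mulrA _ x) /x group_MP_lcancel !mulrA -G3 G1.
Qed.

End MPInverse.

End Involution.

Theorem theorem4p2 (R : pzRingType) (s : R -> R) (a ad ag : R) :
  is_involution s ->
  is_MP_inverse s a ad ->
  is_group_inverse a ag ->
  (is_SEP s a <->
   (is_projection s ((a * s a * ad * ad * a ^+ 2) ^+ 2) /\
    is_projection s ((a * s a * ad * ad * a ^+ 2) ^+ 3))).
Proof.
move=> inv mpd gpg; set x := a * s a * ad * ad * a ^+ 2.
split.
- case=> b [c [mpb gpc sab bc]].
  have bad := MP_inverse_unique inv mpb mpd.
  rewrite -bc bad in gpc; rewrite bad in sab.
  have Px : is_projection s x.
    by rewrite /x group_MP_mul_star_eq // sab; apply: MP_mul_projection.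
  have Pn n : is_projection s (x ^+ n.+1) by rewrite expr_idem //; case: Px.
  by split; apply: Pn.
- case=> [[P2 sP2] [P3 _]].
  have xx : x ^+ 2 = x.
    by apply: (group_MP_expr2_idem inv mpd gpg); apply: expr2_eq_expr3_of_idem.
  have sx : s x = x by rewrite -xx.
  have agd := group_eq_MP_of_herm inv mpd gpg sx; subst ag.
  have idem : a * s a * (a * s a) = a * s a.
    by rewrite -(group_MP_mul_star_eq inv mpd gpg) -expr2.
  exists ad, ad; split => //.
  exact: (MP_inverse_eq_star inv mpd idem).
Qed.
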